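(* For every positive integer $q$ there exists an integer $N_1(q)$ such that for every $n \ge N_1(q)$, every $n$-optimal $q$-configuration is non-attacking.
   Context: For $n \in \mathbb{N}$ let $I_n = \{\lfloor (2-n)/2 \rfloor, \lfloor (2-n)/2\rfloor + 1, \ldots, \lfloor n/2 \rfloor\}$ (a set of $n$ consecutive integers) and let the board be $\mathcal{B}_n = I_n \times I_n$. A configuration (of Queens) is a finite set $\mathcal{C} \subset \mathbb{Z}\times\mathbb{Z}$; it is a $q$-configuration if $|\mathcal{C}| = q$. For a square $Q=(x,y)$, its attacked set is $A(Q) = \{(x+i,y),(x,y+i),(x+i,y+i),(x+i,y-i) : i \in \mathbb{Z}\setminus\{0\}\}$, and $A(\mathcal{C}) = \bigcup_{Q\in\mathcal{C}} A(Q)$. The cover of $\mathcal{C}$ on $\mathcal{B}_n$ is $\mathrm{cover}_n(\mathcal{C}) = |(\mathcal{C}\cup A(\mathcal{C}))\cap \mathcal{B}_n|$. A $q$-configuration $\mathcal{C}\subset\mathcal{B}_n$ is $n$-optimal if $\mathrm{cover}_n(\mathcal{C}') \le \mathrm{cover}_n(\mathcal{C})$ for every $q$-configuration $\mathcal{C}'\subset \mathcal{B}_n$. A configuration $\mathcal{C}$ is non-attacking if $Q' \notin A(Q)$ for all distinct $Q, Q' \in \mathcal{C}$. *)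

From Stdlib Require Import ZArith List Bool Lia.
Import ListNotations.
Open Scope Z_scope.

Definition square := (Z * Z)%type.

(* I_n = { floor((2-n)/2), ..., floor(n/2) } : n consecutive integers *)
Definition lowI (n : nat) : Z := (2 - Z.of_nat n) / 2.   (* Z.div floors *)
Definition highI (n : nat) : Z := Z.of_nat n / 2.
Definition inI (n : nat) (z : Z) : bool := (lowI n <=? z) && (z <=? highI n).
Definition inBoard (n : nat) (P : square) : bool := inI n (fst P) && inI n (snd P).

Definition Ilist (n : nat) : list Z := map (fun k => lowI n + Z.of_nat k) (seq 0 n).
Definition board (n : nat) : list square := list_prod (Ilist n) (Ilist n).

Definition attacks (Q P : square) : bool :=
  let '(x, y) := Q in let '(a, b) := P in
  negb ((x =? a) && (y =? b)) &&
  ((y =? b) || (x =? a) || (a - x =? b - y) || (a - x =? y - b)).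

Definition square_eqb (P Q : square) : bool := (fst P =? fst Q) && (snd P =? snd Q).

Definition covered (C : list square) (P : square) : bool :=
  existsb (square_eqb P) C || existsb (fun Q => attacks Q P) C.

Definition cover (n : nat) (C : list square) : nat :=
  length (filter (covered C) (board n)).

Definition qconfig_on (n q : nat) (C : list square) : Prop :=
  NoDup C /\ length C = q /\ (forall P, In P C -> inBoard n P = true).

Definition n_optimal (n q : nat) (C : list square) : Prop :=
  qconfig_on n q C /\
  forall C', qconfig_on n q C' -> (cover n C' <= cover n C)%nat.

Definition non_attacking (C : list square) : Prop :=
  forall Q Q', In Q C -> In Q' C -> Q <> Q' -> attacks Q Q' = false.

From Stdlib Require Import ZArith List Lia Bool.

(* Count covered squares row by row, a row being {a} x I_n.  A row through a
   queen is fully covered; any other row meets the column and the two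
   diagonals of each queen in three squares, so it has at most 3q covered
   squares.  If two queens attack each other, either they share a row, so only
   q - 1 rows are full, or they share a column or a diagonal, so on every other
   row two of those 3q squares coincide: either way the cover is at most
   4qn - n.  The configuration {(i, 2i) : i < q} has q full rows and 3q distinct
   covered squares on every row at distance at least 4q from 0 and from the
   border of the board, so its cover is at least 4qn - 48q^2.  Hence for
   n > 48q^2 an attacking q-configuration is not optimal. *)

Lemma length_filter_list_prod {A B : Type} (p : A * B -> bool) l1 l2 :
  length (filter p (list_prod l1 l2)) =
  list_sum (map (fun a => length (filter (fun b => p (a, b)) l2)) l1).
Proof.
  induction l1 as [|a l1 IH]; cbn; [reflexivity|].
  now rewrite filter_app, length_app, IH, filter_map_swap, length_map.
Qed.

Lemma list_sum_map_le {A : Type} (f g : A -> nat) l :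
  (forall a, In a l -> (f a <= g a)%nat) ->
  (list_sum (map f l) <= list_sum (map g l))%nat.
Proof.
  unfold list_sum; induction l as [|a l IH]; cbn; intros Hfg; [lia|].
  apply Nat.add_le_mono; auto.
Qed.

Lemma list_sum_map_ite {A : Type} (P R : A -> bool) c d l :
  list_sum (map (fun a => ((if P a then c else 0) + (if R a then d else 0))%nat) l) =
  (c * length (filter P l) + d * length (filter R l))%nat.
Proof.
  unfold list_sum in *; induction l as [|a l IH]; cbn; [lia|].
  rewrite IH; destruct (P a), (R a); cbn; lia.
Qed.

Lemma NoDup_map_inj_in {A B : Type} (f : A -> B) l x y :
  NoDup (map f l) -> In x l -> In y l -> f x = f y -> x = y.
Proof.
  induction l as [|z l IH]; cbn; [tauto|].
  intros Hnd Hx Hy Hxy; inversion Hnd as [|? ? Hz Hl]; subst.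
  destruct Hx as [<-|Hx], Hy as [<-|Hy]; auto; exfalso; apply Hz.
  - rewrite Hxy; now apply in_map.
  - rewrite <- Hxy; now apply in_map.
Qed.

Definition memZ (S : list Z) (b : Z) : bool := existsb (Z.eqb b) S.

Lemma memZ_spec S b : memZ S b = true <-> In b S.
Proof.
  unfold memZ; rewrite existsb_exists; split.
  - now intros [c [Hc ->%Z.eqb_eq]].
  - intros Hb; exists b; auto using Z.eqb_refl.
Qed.

Definition count_mem (l S : list Z) : nat := length (filter (memZ S) l).

Lemma incl_filter_memZ l S : incl (filter (memZ S) l) S.
Proof. intros b Hb; apply filter_In in Hb; now apply memZ_spec. Qed.

Lemma count_mem_le l S : NoDup l -> (count_mem l S <= length S)%nat.
Proof. intros Hl; apply NoDup_incl_length; auto using NoDup_filter, incl_filter_memZ. Qed.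

Lemma count_mem_lt l S : NoDup l -> ~ NoDup S -> (count_mem l S < length S)%nat.
Proof.
  intros Hl HS; apply Nat.nle_gt; intros Hle; apply HS.
  apply (NoDup_incl_NoDup (l := filter (memZ S) l)); auto using NoDup_filter, incl_filter_memZ.
Qed.

Lemma count_mem_ge l S : NoDup S -> incl S l -> (length S <= count_mem l S)%nat.
Proof.
  intros HS Hincl; apply NoDup_incl_length; auto.
  intros b Hb; apply filter_In; split; auto; now apply memZ_spec.
Qed.

Definition zseq (u : Z) (w : nat) : list Z := map (fun k => u + Z.of_nat k) (seq 0 w).

Lemma in_zseq u w a : In a (zseq u w) <-> u <= a < u + Z.of_nat w.
Proof.
  unfold zseq; rewrite in_map_iff; split.
  - intros [k [<- Hk%in_seq]]; lia.
  - intros Ha; exists (Z.to_nat (a - u)); rewrite in_seq; lia.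
Qed.

Lemma zseq_NoDup u w : NoDup (zseq u w).
Proof.
  apply NoDup_map_NoDup_ForallPairs; [intros i j _ _; lia | apply seq_NoDup].
Qed.

Lemma length_zseq u w : length (zseq u w) = w.
Proof. unfold zseq; now rewrite length_map, length_seq. Qed.

Lemma lowI_highI n : (1 <= n)%nat ->
  highI n = lowI n + Z.of_nat n - 1 /\ Z.of_nat n <= 2 * highI n + 1 <= Z.of_nat n + 1.
Proof.
  intros Hn; unfold highI, lowI.
  pose proof (Z.div_mod (2 - Z.of_nat n) 2 ltac:(lia)).
  pose proof (Z.mod_pos_bound (2 - Z.of_nat n) 2 ltac:(lia)).
  pose proof (Z.div_mod (Z.of_nat n) 2 ltac:(lia)).
  pose proof (Z.mod_pos_bound (Z.of_nat n) 2 ltac:(lia)).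
  lia.
Qed.

Lemma Ilist_zseq n : Ilist n = zseq (lowI n) n.
Proof. reflexivity. Qed.

Lemma length_Ilist n : length (Ilist n) = n.
Proof. apply length_zseq. Qed.

Lemma Ilist_NoDup n : NoDup (Ilist n).
Proof. apply zseq_NoDup. Qed.

Lemma in_Ilist n a : (1 <= n)%nat -> In a (Ilist n) <-> lowI n <= a <= highI n.
Proof. intros Hn; rewrite Ilist_zseq, in_zseq; pose proof (lowI_highI n Hn); lia. Qed.

Lemma attacks_spec x y a b : attacks (x, y) (a, b) = true <->
  (x, y) <> (a, b) /\ (y = b \/ x = a \/ a - x = b - y \/ a - x = y - b).
Proof.
  unfold attacks.
  destruct (Z.eqb_spec x a), (Z.eqb_spec y b), (Z.eqb_spec (a - x) (b - y)),
    (Z.eqb_spec (a - x) (y - b)); cbn; split; intuition congruence.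
Qed.

Definition row_cover (n : nat) (C : list square) (a : Z) : nat :=
  length (filter (fun b => covered C (a, b)) (Ilist n)).

Lemma cover_by_rows n C : cover n C = list_sum (map (row_cover n C) (Ilist n)).
Proof. apply length_filter_list_prod. Qed.

Definition shadow (C : list square) (a : Z) : list Z :=
  map snd C ++ map (fun Q => snd Q + (a - fst Q)) C ++ map (fun Q => snd Q - (a - fst Q)) C.

Lemma length_shadow (C : list (Z * Z)) a : length (shadow C a) = (3 * length C)%nat.
Proof. unfold shadow; rewrite !length_app, !length_map; lia. Qed.

Lemma covered_queen_row C a b : In a (map fst C) -> covered C (a, b) = true.
Proof.
  intros [[x y] [<- HQ]]%in_map_iff; cbn.
  unfold covered; apply orb_true_iff; rewrite !existsb_exists.
  destruct (Z.eq_dec y b) as [<-|Hyb].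
  - left; exists (x, y); split; auto; unfold square_eqb; cbn; now rewrite !Z.eqb_refl.
  - right; exists (x, y); split; auto; apply attacks_spec; split; [congruence | auto].
Qed.

Lemma covered_empty_row C a b :
  ~ In a (map fst C) -> covered C (a, b) = memZ (shadow C a) b.
Proof.
  intros Ha; apply eq_iff_eq_true.
  assert (Hrow : forall x y, In (x, y) C -> x <> a).
  { intros x y HQ ->; apply Ha, in_map_iff; now exists (a, y). }
  unfold covered, shadow.
  rewrite memZ_spec, orb_true_iff, !existsb_exists, !in_app_iff, !in_map_iff; split.
  - intros [[[x y] [HQ Heq]] | [[x y] [HQ Hatt]]].
    + unfold square_eqb in Heq; cbn in Heq.
      apply andb_true_iff in Heq as [->%Z.eqb_eq _]; now destruct (Hrow _ _ HQ).
    + specialize (Hrow _ _ HQ).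
      apply attacks_spec in Hatt as [_ [Hb | [Hb | [Hb | Hb]]]];
        [left | easy | right; left | right; right]; exists (x, y); cbn; split; auto; lia.
  - intros Hb; right.
    destruct Hb as [[[x y] [Hb HQ]] | [[[x y] [Hb HQ]] | [[x y] [Hb HQ]]]];
      exists (x, y); split; auto; specialize (Hrow _ _ HQ); cbn in Hb;
      apply attacks_spec; (split; [congruence | lia]).
Qed.

Lemma row_cover_queen_row n C a : In a (map fst C) -> row_cover n C a = n.
Proof.
  intros Ha; unfold row_cover.
  rewrite (filter_ext_in _ (fun _ => true)), filter_true; [apply length_Ilist|].
  intros b _; now apply covered_queen_row.
Qed.

Lemma row_cover_empty_row n C a :
  ~ In a (map fst C) -> row_cover n C a = count_mem (Ilist n) (shadow C a).
Proof.
  intros Ha; unfold row_cover, count_mem; f_equal.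
  apply filter_ext; intros b; now apply covered_empty_row.
Qed.

Lemma cover_le n C m :
  (forall a, ~ In a (map fst C) -> (count_mem (Ilist n) (shadow C a) <= m)%nat) ->
  (cover n C <= n * count_mem (Ilist n) (map fst C) + m * n)%nat.
Proof.
  intros Hempty; rewrite cover_by_rows.
  replace (m * n)%nat with (m * length (filter (fun _ => true) (Ilist n)))%nat
    by now rewrite filter_true, length_Ilist.
  unfold count_mem at 1; rewrite <- list_sum_map_ite.
  apply list_sum_map_le; intros a _.
  destruct (memZ (map fst C) a) eqn:Ha.
  - apply memZ_spec in Ha; rewrite row_cover_queen_row by exact Ha; lia.
  - assert (Ha' : ~ In a (map fst C)) by now rewrite <- memZ_spec, Ha.
    rewrite row_cover_empty_row by exact Ha'; specialize (Hempty a Ha'); lia.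
Qed.

Lemma cover_ge n C m (G : Z -> bool) :
  (forall a, G a = true ->
     ~ In a (map fst C) /\ (m <= count_mem (Ilist n) (shadow C a))%nat) ->
  (n * count_mem (Ilist n) (map fst C) + m * length (filter G (Ilist n)) <= cover n C)%nat.
Proof.
  intros HG; rewrite cover_by_rows; unfold count_mem at 1; rewrite <- list_sum_map_ite.
  apply list_sum_map_le; intros a _.
  destruct (memZ (map fst C) a) eqn:Ha, (G a) eqn:Ga.
  - apply memZ_spec in Ha; now destruct (HG a Ga).
  - apply memZ_spec in Ha; rewrite row_cover_queen_row by exact Ha; lia.
  - destruct (HG a Ga) as [Ha' Hm]; rewrite row_cover_empty_row by exact Ha'; lia.
  - lia.
Qed.

Lemma attacking_pair_collision C Q Q' :
  In Q C -> In Q' C -> Q <> Q' -> attacks Q Q' = true ->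
  ~ NoDup (map fst C) \/ (forall a, ~ NoDup (shadow C a)).
Proof.
  destruct Q as [x y], Q' as [u v]; intros HQ HQ' Hne Hatt.
  apply attacks_spec in Hatt as [_ [Hrow | [Hcol | [Hdiag | Hanti]]]].
  - right; intros a Hnd%NoDup_app_remove_r.
    apply Hne, (NoDup_map_inj_in snd C); auto.
  - left; intros Hnd; apply Hne, (NoDup_map_inj_in fst C); auto.
  - right; intros a Hnd%NoDup_app_remove_l%NoDup_app_remove_r.
    apply Hne, (NoDup_map_inj_in _ C _ _ Hnd); auto; cbn; lia.
  - right; intros a Hnd%NoDup_app_remove_l%NoDup_app_remove_l.
    apply Hne, (NoDup_map_inj_in _ C _ _ Hnd); auto; cbn; lia.
Qed.

Lemma cover_attacking_le n C Q Q' :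
  In Q C -> In Q' C -> Q <> Q' -> attacks Q Q' = true ->
  (cover n C + n <= 4 * length C * n)%nat.
Proof.
  (* [lia] treats [@length square C] and [@length (Z * Z) C] as different atoms. *)
  intros HQ HQ' Hne Hatt; unfold square in *.
  assert (Hq : (1 <= length C)%nat) by (destruct C; [easy | cbn; lia]).
  set (rows := count_mem (Ilist n) (map fst C)).
  assert (Hrows : (rows <= length C)%nat).
  { rewrite <- (length_map fst C); apply count_mem_le, Ilist_NoDup. }
  destruct (attacking_pair_collision C Q Q' HQ HQ' Hne Hatt) as [Hfst | Hshadow].
  - assert (Hlt : (rows < length C)%nat).
    { rewrite <- (length_map fst C); apply count_mem_lt; auto using Ilist_NoDup. }
    enough (cover n C <= n * rows + 3 * length C * n)%nat by nia.
    apply cover_le; intros a _.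
    rewrite <- length_shadow with (a := a); apply count_mem_le, Ilist_NoDup.
  - enough (cover n C <= n * rows + (3 * length C - 1) * n)%nat by nia.
    apply cover_le; intros a _.
    pose proof (count_mem_lt (Ilist n) (shadow C a) (Ilist_NoDup n) (Hshadow a)).
    rewrite length_shadow in *; lia.
Qed.

Definition diag_queen (i : nat) : square := (Z.of_nat i, 2 * Z.of_nat i).

Definition diag_config (q : nat) : list square := map diag_queen (seq 0 q).

Lemma in_diag_config q Q :
  In Q (diag_config q) <-> exists i, (i < q)%nat /\ Q = diag_queen i.
Proof.
  unfold diag_config; rewrite in_map_iff; split.
  - intros [i [<- Hi%in_seq]]; exists i; split; [lia | reflexivity].
  - intros [i [Hi ->]]; exists i; rewrite in_seq; split; [reflexivity | lia].
Qed.

Lemma NoDup_map_diag_config {B : Type} (f : square -> B) q :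
  (forall i j, f (diag_queen i) = f (diag_queen j) -> i = j) -> NoDup (map f (diag_config q)).
Proof.
  intros Hf; unfold diag_config; rewrite map_map.
  apply NoDup_map_NoDup_ForallPairs; [intros i j _ _; apply Hf | apply seq_NoDup].
Qed.

Lemma diag_config_qconfig n q :
  (1 <= n)%nat -> (4 * q <= n)%nat -> qconfig_on n q (diag_config q).
Proof.
  intros Hn Hq; pose proof (lowI_highI n Hn).
  split; [|split].
  - rewrite <- map_id; apply NoDup_map_diag_config; intros i j [=]; lia.
  - unfold diag_config; now rewrite length_map, length_seq.
  - intros P [i [Hi ->]]%in_diag_config.
    unfold inBoard, inI, diag_queen; cbn [fst snd].
    rewrite !andb_true_iff, !Z.leb_le; lia.
Qed.

Ltac destruct_in_diag_map H :=
  apply in_map_iff in H as [? [? [? [? ->]]%in_diag_config]];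
  unfold diag_queen in *; cbn [fst snd] in *.

Lemma shadow_diag_config_NoDup q a :
  4 * Z.of_nat q <= Z.abs a -> NoDup (shadow (diag_config q) a).
Proof.
  intros Ha; unfold shadow.
  apply NoDup_app; [| apply NoDup_app |].
  all: try (apply NoDup_map_diag_config; intros i j; unfold diag_queen; cbn [fst snd]; lia).
  all: intros b Hb1 Hb2; try apply in_app_iff in Hb2 as [Hb2 | Hb2].
  all: destruct_in_diag_map Hb1; destruct_in_diag_map Hb2; lia.
Qed.

Lemma shadow_diag_config_incl n q a : (1 <= n)%nat -> (4 * q <= n)%nat ->
  lowI n + 4 * Z.of_nat q <= a <= highI n - 4 * Z.of_nat q ->
  incl (shadow (diag_config q) a) (Ilist n).
Proof.
  intros Hn Hq Ha b Hb; pose proof (lowI_highI n Hn).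
  apply in_Ilist; [exact Hn|].
  unfold shadow in Hb; rewrite !in_app_iff in Hb.
  destruct Hb as [Hb | [Hb | Hb]]; destruct_in_diag_map Hb; lia.
Qed.

Definition far_row (n q : nat) (a : Z) : bool :=
  (lowI n + 4 * Z.of_nat q <=? a) && (a <=? highI n - 4 * Z.of_nat q)
  && (4 * Z.of_nat q <=? Z.abs a).

Lemma far_row_spec n q a : far_row n q a = true <->
  lowI n + 4 * Z.of_nat q <= a <= highI n - 4 * Z.of_nat q /\ 4 * Z.of_nat q <= Z.abs a.
Proof. unfold far_row; rewrite !andb_true_iff, !Z.leb_le; tauto. Qed.

Lemma count_far_rows n q : (1 <= n)%nat ->
  (n <= length (filter (far_row n q) (Ilist n)) + 16 * q)%nat.
Proof.
  intros Hn; pose proof (lowI_highI n Hn).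
  pose proof (filter_length (far_row n q) (Ilist n)) as Hsplit; rewrite length_Ilist in Hsplit.
  set (near := zseq (lowI n) (4 * q) ++ zseq (highI n - 4 * Z.of_nat q + 1) (4 * q)
                 ++ zseq (- 4 * Z.of_nat q + 1) (8 * q)).
  enough (length (filter (fun a => negb (far_row n q a)) (Ilist n)) <= length near)%nat
    by (unfold near in *; rewrite !length_app, !length_zseq in *; lia).
  apply NoDup_incl_length; [apply NoDup_filter, Ilist_NoDup|].
  intros a [Ha Hfar]%filter_In; apply in_Ilist in Ha; [|exact Hn].
  assert (Hnear : ~ (lowI n + 4 * Z.of_nat q <= a <= highI n - 4 * Z.of_nat q
                     /\ 4 * Z.of_nat q <= Z.abs a))
    by (rewrite <- far_row_spec; now apply negb_true_iff in Hfar as ->).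
  unfold near; rewrite !in_app_iff, !in_zseq; lia.
Qed.

Lemma cover_diag_config_ge n q : (1 <= n)%nat -> (4 * q <= n)%nat ->
  (4 * q * n <= cover n (diag_config q) + 48 * q * q)%nat.
Proof.
  intros Hn Hq; pose proof (lowI_highI n Hn).
  set (rows := count_mem (Ilist n) (map fst (diag_config q))).
  set (far := length (filter (far_row n q) (Ilist n))).
  assert (Hrows : (q <= rows)%nat).
  { replace q with (length (map fst (diag_config q))) at 1
      by (unfold diag_config; now rewrite !length_map, length_seq).
    apply count_mem_ge.
    - apply NoDup_map_diag_config; intros i j [=]; lia.
    - intros a Ha; destruct_in_diag_map Ha; apply in_Ilist; lia. }
  assert (Hcover : (n * rows + 3 * q * far <= cover n (diag_config q))%nat).
  { apply cover_ge; intros a [Hrange Habs]%far_row_spec; split.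
    - intros Ha; destruct_in_diag_map Ha; lia.
    - replace (3 * q)%nat with (length (shadow (diag_config q) a))
        by (rewrite length_shadow; unfold diag_config; now rewrite length_map, length_seq).
      apply count_mem_ge;
        [now apply shadow_diag_config_NoDup | now apply shadow_diag_config_incl]. }
  assert (n * q <= n * rows)%nat by (apply Nat.mul_le_mono_l, Hrows).
  assert (3 * q * n <= 3 * q * (far + 16 * q))%nat
    by (apply Nat.mul_le_mono_l, count_far_rows, Hn).
  lia.
Qed.

Theorem mainTheorem1 :
  forall q : nat, (0 < q)%nat ->
  exists N1 : nat, forall n : nat, (N1 <= n)%nat ->
    forall C : list square, n_optimal n q C -> non_attacking C.
Proof.
  intros q _; exists (48 * q * q + 1)%nat.
  intros n Hn C [[_ [Hlen _]] Hopt] Q Q' HQ HQ' Hne.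
  destruct (attacks Q Q') eqn:Hatt; [exfalso | reflexivity].
  pose proof (cover_attacking_le n C Q Q' HQ HQ' Hne Hatt) as Hupper; rewrite Hlen in Hupper.
  pose proof (Hopt _ (diag_config_qconfig n q ltac:(nia) ltac:(nia))) as Hoptimal.
  pose proof (cover_diag_config_ge n q ltac:(nia) ltac:(nia)) as Hlower.
  lia.
Qed.
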